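(* Let $R$ be a commutative ring and $\mathcal{A}=\{L_1,\dots,L_n\}$ an arrangement of affine lines in $\mathbb{C}^2$ with parallel class decomposition $\mathcal{A}=\mathcal{A}_1\sqcup\dots\sqcup\mathcal{A}_s$. Let $\mathcal{C}_s$ be an arrangement of $s$ distinct lines through the origin of $\mathbb{C}^2$, with Orlik–Solomon generators $\tilde e_1,\dots,\tilde e_s$. Then there exists an $R$-algebra homomorphism $\Delta_{tot}:A^*_R(\mathcal{A})\to A^*_R(\mathcal{C}_s)$ with $\Delta_{tot}(e_i)=\tilde e_\alpha$ whenever $L_i\in\mathcal{A}_\alpha$ ($1\le\alpha\le s$).
   Context: The parallel class decomposition is the partition of $\mathcal{A}$ into classes such that two lines are parallel (including equal direction) iff they lie in the same class $\mathcal{A}_\alpha$. The Orlik–Solomon algebra $A^*_R(\mathcal{A})$ of an arrangement $\mathcal{A}=\{L_1,\dots,L_n\}$ of affine lines in $\mathbb{C}^2$ over a commutative ring $R$ is the graded $R$-algebra with $A^0_R=R$, $A^1_R=\bigoplus_{i=1}^n R e_i$, $A^2_R=\bigwedge^2 A^1_R/I$ where $I$ is the $R$-submodule generated by (i) $e_i\wedge e_j$ for each pair of parallel lines $L_i\parallel L_j$ and (ii) $e_i\wedge e_j-e_i\wedge e_k+e_j\wedge e_k$ for each triple of lines with $L_i\cap L_j\cap L_k\neq\emptyset$, and $A^q_R=0$ for $q\ge3$; multiplication is the wedge product. *)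

From HB Require Import structures.
From mathcomp Require Import all_boot all_order all_algebra.
Set Implicit Arguments. Unset Strict Implicit. Unset Printing Implicit Defensive.
Import GRing.Theory Num.Theory.
Local Open Scope ring_scope.

Record line (K : fieldType) := Line {
  la : K; lb : K; lc : K;
  line_nondeg : (la, lb) != (0, 0) }.

Definition on_line (K : fieldType) (L : line K) (p : K * K) : Prop :=
  la L * p.1 + lb L * p.2 = lc L.

Definition same_line (K : fieldType) (L1 L2 : line K) : Prop :=
  forall p, on_line L1 p <-> on_line L2 p.

Definition parallel (K : fieldType) (L1 L2 : line K) : Prop :=
  la L1 * lb L2 = la L2 * lb L1.

Definition concurrent (K : fieldType) (L1 L2 L3 : line K) : Prop :=
  exists p, [/\ on_line L1 p, on_line L2 p & on_line L3 p].

(** The truncated tensor algebra R (+) R^n (+) (R^n (x) R^n), in which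
    degree 2 is represented by matrices: W = sum_{i,j} W i j  e_i (x) e_j.
    The Orlik--Solomon algebra is its quotient by [os_equiv] below
    (degree >= 3 is already truncated, A^q = 0 for q >= 3). *)
Record osElt (R : comPzRingType) (n : nat) := OsElt {
  os0 : R; os1 : 'rV[R]_n; os2 : 'M[R]_n }.

Section OSops.
Variables (R : comPzRingType) (n : nat).
Implicit Types (x y : osElt R n) (r : R).

Definition osadd x y : osElt R n :=
  OsElt (os0 x + os0 y) (os1 x + os1 y) (os2 x + os2 y).
Definition osscale r x : osElt R n :=
  OsElt (r * os0 x) (r *: os1 x) (r *: os2 x).
Definition osmul x y : osElt R n :=
  OsElt (os0 x * os0 y)
        (os0 x *: os1 y + os0 y *: os1 x)
        (os0 x *: os2 y + os0 y *: os2 x + (os1 x)^T *m os1 y).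
Definition osone : osElt R n := OsElt 1 0 0.
Definition osgen (i : 'I_n) : osElt R n := OsElt 0 (delta_mx ord0 i) 0.
End OSops.

(** Membership of a degree-2 tensor W in the R-submodule generated by
    - e_i(x)e_j + e_j(x)e_i and e_i(x)e_i   (exterior-power relations),
    - e_i(x)e_j for parallel L_i, L_j,
    - e_i e_j - e_i e_k + e_j e_k for concurrent L_i, L_j, L_k. *)
Definition os_rel (R : comPzRingType) (K : fieldType) (n : nat)
    (L : 'I_n -> line K) (W : 'M[R]_n) : Prop :=
  exists (a : 'I_n -> 'I_n -> R) (b : 'I_n -> R) (c : 'I_n -> 'I_n -> R)
         (d : 'I_n -> 'I_n -> 'I_n -> R),
    [/\ forall i j, ~ parallel (L i) (L j) -> c i j = 0,
        forall i j k, ~ concurrent (L i) (L j) (L k) -> d i j k = 0 &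
        W = \sum_i \sum_j a i j *: (delta_mx i j + delta_mx j i)
          + \sum_i b i *: delta_mx i i
          + \sum_i \sum_j c i j *: delta_mx i j
          + \sum_i \sum_j \sum_k d i j k *:
               (delta_mx i j - delta_mx i k + delta_mx j k)].
Arguments os_rel R {K n} L W.

Definition os_equiv (R : comPzRingType) (K : fieldType) (n : nat)
    (L : 'I_n -> line K) (x y : osElt R n) : Prop :=
  [/\ os0 x = os0 y, os1 x = os1 y & os_rel R L (os2 x - os2 y)].
Arguments os_equiv R {K n} L x y.

(** f (on representatives) induces an R-algebra homomorphism
    A^*_R(L) -> A^*_R(L'). *)
Definition os_hom (R : comPzRingType) (K : fieldType) (n m : nat)
    (L : 'I_n -> line K) (L' : 'I_m -> line K)
    (f : osElt R n -> osElt R m) : Prop :=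
  [/\ forall x y, os_equiv R L x y -> os_equiv R L' (f x) (f y),
      forall x y, os_equiv R L' (f (osadd x y)) (osadd (f x) (f y)),
      forall r x, os_equiv R L' (f (osscale r x)) (osscale r (f x)),
      forall x y, os_equiv R L' (f (osmul x y)) (osmul (f x) (f y)) &
      os_equiv R L' (f (osone R n)) (osone R m)].
Arguments os_hom R {K n m} L L' f.

From HB Require Import structures.
From mathcomp Require Import all_boot all_order all_algebra.
Set Implicit Arguments. Unset Strict Implicit. Unset Printing Implicit Defensive.
Import GRing.Theory Num.Theory.
Local Open Scope ring_scope.

(** The proof works for an arbitrary map of generators.  A map
    [sigma : 'I_n -> 'I_m] induces a map [osmap sigma] of truncated tensor
    algebras: identity in degree 0, right multiplication by the 0/1 matrix
    [genmx sigma] (sending e_i to e_(sigma i)) in degree 1, and the congruence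
    [W |-> genmx^T W genmx] (sending e_i (x) e_j to e_(sigma i) (x) e_(sigma j))
    in degree 2.  It commutes on the nose with sum, scaling, product, unit
    and generators.  It descends to the Orlik--Solomon quotients as soon as
    it sends relations to relations, which holds when sigma maps parallel
    pairs to parallel pairs and concurrent triples to concurrent triples,
    because the relation module is generated by the images of these
    generators.  For the parallel class map [cls], parallel lines go to the
    same index, and every triple of lines of a central arrangement meets at
    the origin. *)

Lemma sum_scaleDl (R : pzRingType) (V : lmodType R) (I : finType)
    (F G : I -> R) (M : I -> V) :
  \sum_i (F i + G i) *: M i = \sum_i F i *: M i + \sum_i G i *: M i.
Proof. by rewrite -big_split; apply: eq_bigr => i _; rewrite scalerDl. Qed.

Lemma scaler_sum_scale (R : comPzRingType) (V : lmodType R) (I : finType)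
    (r : R) (F : I -> R) (M : I -> V) :
  r *: \sum_i F i *: M i = \sum_i (r * F i) *: M i.
Proof. by rewrite scaler_sumr; apply: eq_bigr => i _; rewrite scalerA. Qed.

Lemma sum_scale0 (R : pzRingType) (V : lmodType R) (I : finType) (M : I -> V) :
  \sum_i (0 : R) *: M i = 0.
Proof. by rewrite big1 // => i _; rewrite scale0r. Qed.

Lemma sum_indicator (R : pzRingType) (V : lmodType R) (I : finType)
    (x : I) (M : I -> V) :
  \sum_i ((i == x)%:R : R) *: M i = M x.
Proof.
rewrite (bigD1 x) //= eqxx scale1r big1 ?addr0 // => i /negbTE ->.
by rewrite scale0r.
Qed.

Lemma parallel_refl (K : fieldType) (L : line K) : parallel L L.
Proof. by []. Qed.

Section Relations.
Variables (R : comPzRingType) (K : fieldType) (n : nat) (L : 'I_n -> line K).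

Lemma rel0 : os_rel R L 0.
Proof.
exists (fun _ _ => 0), (fun _ => 0), (fun _ _ => 0), (fun _ _ _ => 0); split => //.
by rewrite !pair_bigA !sum_scale0 !addr0.
Qed.

Lemma relD W1 W2 : os_rel R L W1 -> os_rel R L W2 -> os_rel R L (W1 + W2).
Proof.
move=> [a [b [c [d [Hc Hd ->]]]]] [a' [b' [c' [d' [Hc' Hd' ->]]]]].
exists (fun i j => a i j + a' i j), (fun i => b i + b' i),
  (fun i j => c i j + c' i j), (fun i j k => d i j k + d' i j k); split.
- by move=> i j /[dup] /Hc -> /Hc' ->; rewrite addr0.
- by move=> i j k /[dup] /Hd -> /Hd' ->; rewrite addr0.
rewrite !pair_bigA !sum_scaleDl.
(* regroup the eight sums family by family *)
by rewrite [LHS](AC (4*4) ((1*5)*(2*6)*(3*7)*(4*8))).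
Qed.

Lemma relZ r W : os_rel R L W -> os_rel R L (r *: W).
Proof.
move=> [a [b [c [d [Hc Hd ->]]]]].
exists (fun i j => r * a i j), (fun i => r * b i), (fun i j => r * c i j),
  (fun i j k => r * d i j k); split.
- by move=> i j /Hc ->; rewrite mulr0.
- by move=> i j k /Hd ->; rewrite mulr0.
by rewrite !pair_bigA !scalerDr !scaler_sum_scale.
Qed.

Lemma rel_sum (I : finType) (F : I -> 'M[R]_n) :
  (forall i, os_rel R L (F i)) -> os_rel R L (\sum_i F i).
Proof. by move=> relF; apply: big_ind => //; [exact: rel0 | exact: relD]. Qed.

Lemma rel_antisym a b : os_rel R L (delta_mx a b + delta_mx b a).
Proof.
exists (fun i j => ((i, j) == (a, b))%:R), (fun _ => 0), (fun _ _ => 0),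
  (fun _ _ _ => 0); split => //.
by rewrite !pair_bigA sum_indicator !sum_scale0 !addr0.
Qed.

(** A multiple of e_a(x)e_b is a relation when its coefficient vanishes
    unless L_a and L_b are parallel; phrased this way, it applies to the
    coefficients of [os_rel] without deciding parallelism. *)
Lemma rel_parallel r a b : (~ parallel (L a) (L b) -> r = 0) ->
  os_rel R L (r *: delta_mx a b).
Proof.
move=> r0; exists (fun _ _ => 0), (fun _ => 0),
  (fun i j => r * ((i, j) == (a, b))%:R), (fun _ _ _ => 0); split => //.
  move=> i j ij; case: eqP => [[ei ej] | _]; last by rewrite mulr0.
  by rewrite r0 ?mul0r // -ei -ej.
by rewrite !pair_bigA -scaler_sum_scale sum_indicator !sum_scale0 addr0 !add0r.
Qed.

(** Likewise for the three-term relation of a triple L_a, L_b, L_c; this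
    avoids deciding concurrency, which is not a boolean property. *)
Lemma rel_concurrent r a b c : (~ concurrent (L a) (L b) (L c) -> r = 0) ->
  os_rel R L (r *: (delta_mx a b - delta_mx a c + delta_mx b c)).
Proof.
move=> r0; exists (fun _ _ => 0), (fun _ => 0), (fun _ _ => 0),
  (fun i j k => r * ((i, j, k) == (a, b, c))%:R); split => //.
  move=> i j k ijk; case: eqP => [[ei ej ek] | _]; last by rewrite mulr0.
  by rewrite r0 ?mul0r // -ei -ej -ek.
by rewrite !pair_bigA -scaler_sum_scale sum_indicator !sum_scale0 !add0r.
Qed.

End Relations.

Lemma os_equiv_refl (R : comPzRingType) (K : fieldType) (n : nat)
    (L : 'I_n -> line K) (x : osElt R n) : os_equiv R L x x.
Proof. by split => //; rewrite subrr; exact: rel0. Qed.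

Section InducedMap.
Variables (R : comPzRingType) (n m : nat) (sigma : 'I_n -> 'I_m).

Definition genmx : 'M[R]_(n, m) := \sum_k delta_mx k (sigma k).

Lemma delta_genmx (p : nat) (i : 'I_p) (j : 'I_n) :
  delta_mx i j *m genmx = delta_mx i (sigma j).
Proof.
rewrite /genmx mulmx_sumr (bigD1 j) //= mul_delta_mx big1 ?addr0 // => k.
by move=> /negbTE kj; rewrite mul_delta_mx_cond eq_sym kj mulr0n.
Qed.

Definition tensmap (W : 'M[R]_n) : 'M[R]_m := genmx^T *m W *m genmx.

Fact tensmap_is_linear : linear tensmap.
Proof. by move=> a A B; rewrite /tensmap mulmxDr mulmxDl -scalemxAr -scalemxAl. Qed.

HB.instance Definition _ :=
  GRing.isLinear.Build R 'M[R]_n 'M[R]_m _ tensmap tensmap_is_linear.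

Lemma tensmap_delta i j : tensmap (delta_mx i j) = delta_mx (sigma i) (sigma j).
Proof.
rewrite /tensmap -mulmxA delta_genmx -[delta_mx i _]trmxK trmx_delta -trmx_mul.
by rewrite delta_genmx trmx_delta.
Qed.

Lemma tensmap_delta3 i j k :
  tensmap (delta_mx i j - delta_mx i k + delta_mx j k) =
  delta_mx (sigma i) (sigma j) - delta_mx (sigma i) (sigma k)
  + delta_mx (sigma j) (sigma k).
Proof. by rewrite linearD linearB /= !tensmap_delta. Qed.

Lemma tensmap_outer (u v : 'rV[R]_n) :
  tensmap (u^T *m v) = (u *m genmx)^T *m (v *m genmx).
Proof. by rewrite /tensmap trmx_mul !mulmxA. Qed.

Definition osmap (x : osElt R n) : osElt R m :=
  OsElt (os0 x) (os1 x *m genmx) (tensmap (os2 x)).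

Lemma osmap_add x y : osmap (osadd x y) = osadd (osmap x) (osmap y).
Proof. by rewrite /osmap /osadd /= mulmxDl linearD. Qed.

Lemma osmap_scale r x : osmap (osscale r x) = osscale r (osmap x).
Proof. by rewrite /osmap /osscale /= -scalemxAl linearZ. Qed.

Lemma osmap_mul x y : osmap (osmul x y) = osmul (osmap x) (osmap y).
Proof.
by rewrite /osmap /osmul /= mulmxDl -!scalemxAl !linearD !linearZ /= tensmap_outer.
Qed.

Lemma osmap_one : osmap (osone R n) = osone R m.
Proof. by rewrite /osmap /osone /= mul0mx linear0. Qed.

Lemma osmap_gen i : osmap (osgen R i) = osgen R (sigma i).
Proof. by rewrite /osmap /osgen /= delta_genmx linear0. Qed.

End InducedMap.

Section Descent.
Variables (R : comPzRingType) (K : fieldType) (n m : nat).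
Variables (L : 'I_n -> line K) (L' : 'I_m -> line K) (sigma : 'I_n -> 'I_m).
Hypothesis sigma_parallel : forall i j,
  parallel (L i) (L j) -> parallel (L' (sigma i)) (L' (sigma j)).
Hypothesis sigma_concurrent : forall i j k,
  concurrent (L i) (L j) (L k) ->
  concurrent (L' (sigma i)) (L' (sigma j)) (L' (sigma k)).

(** Each generating relation of [L] is sent to a relation of [L']: the
    symmetric tensors to symmetric tensors, the squares e_i(x)e_i and the
    parallel terms to parallel terms, and the three-term expressions of
    concurrent triples to those of concurrent triples. *)
Lemma tensmap_rel W : os_rel R L W -> os_rel R L' (tensmap sigma W).
Proof.
move=> [a [b [c [d [Hc Hd ->]]]]].
rewrite !pair_bigA !linearD !linear_sum.
apply: relD; [apply: relD; [apply: relD|] |];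
  apply: rel_sum => p; rewrite linearZ /=.
- by apply: relZ; rewrite linearD /= !tensmap_delta; exact: rel_antisym.
- by rewrite tensmap_delta; apply: rel_parallel => /(_ (parallel_refl _)).
- rewrite tensmap_delta; apply: rel_parallel.
  by move=> /(contra_not (@sigma_parallel _ _)) /Hc.
- rewrite tensmap_delta3; apply: rel_concurrent.
  by move=> /(contra_not (@sigma_concurrent _ _ _)) /Hd.
Qed.

Lemma osmap_hom : os_hom R L L' (osmap sigma).
Proof.
split=> [x y [e0 e1 e2] | x y | r x | x y |].
- by split; rewrite /= ?e0 ?e1 // -linearB; exact: tensmap_rel e2.
- by rewrite osmap_add; exact: os_equiv_refl.
- by rewrite osmap_scale; exact: os_equiv_refl.
- by rewrite osmap_mul; exact: os_equiv_refl.
- by rewrite osmap_one; exact: os_equiv_refl.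
Qed.

End Descent.

Theorem theorem3p1 (R : comPzRingType) (K : numClosedFieldType) (n s : nat)
  (L : 'I_n -> line K)
  (L_distinct : forall i j, same_line (L i) (L j) -> i = j)
  (cls : 'I_n -> 'I_s)
  (cls_surj : forall a : 'I_s, exists i, cls i = a)
  (cls_par : forall i j, parallel (L i) (L j) <-> cls i = cls j)
  (C : 'I_s -> line K)
  (C_origin : forall a, on_line (C a) (0, 0))
  (C_distinct : forall a b, same_line (C a) (C b) -> a = b) :
  exists f : osElt R n -> osElt R s,
    os_hom R L C f /\
    forall i, os_equiv R C (f (osgen R i)) (osgen R (cls i)).
Proof.
have cls_parallel i j : parallel (L i) (L j) -> parallel (C (cls i)) (C (cls j)).
  by move=> /cls_par ->; exact: parallel_refl.
have C_concurrent a b c : concurrent (C a) (C b) (C c).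
  by exists (0, 0); split; exact: C_origin.
exists (osmap cls); split.
  by apply: osmap_hom => [i j | i j k _]; [exact: cls_parallel | exact: C_concurrent].
by move=> i; rewrite osmap_gen; exact: os_equiv_refl.
Qed.
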